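(* Let $P,Q$ be finite rooted posets that are Boolean sums of stack-depth at most $1$. If $(P,c,x)$ and $(Q,c',y)$ are $n$-generated models on them (rooted at their roots) which are $2$-bisimilar, then they are isomorphic.
   Context: The depth of a point $x$ in a finite poset is the largest $m$ with a chain $x=x_1<\dots<x_m$. A finite rooted poset is a Boolean sum if (1) whenever $y$ is an immediate successor of $x$ then $d(x)=d(y)+1$, and (2) each point of depth $k+1$ lies below all points of depth $k$. For a Boolean sum, let $c_i$ be the number of points of depth $i$; a $k$-stack is a run of $k$ consecutive depths each containing more than one point; the stack-depth is the largest $k$ for which a $k$-stack exists (0 if none). A model over $n$ is a finite rooted poset with an order-preserving colouring $c$ into subsets of $\{p_1,\dots,p_n\}$; it is $n$-generated if no two distinct points generate bisimilar rooted submodels. $k$-bisimulation: relations $S_k\subseteq\dots\subseteq S_0$ with the roots related by $S_k$, $S_0$ colour-preserving, and for $j<k$ forth and back conditions along $\le$ from $S_{j+1}$ to $S_j$. *)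

From mathcomp Require Import all_boot.
Set Implicit Arguments. Unset Strict Implicit. Unset Printing Implicit Defensive.

Definition is_poset (T : finType) (le : rel T) : Prop :=
  reflexive le /\ antisymmetric le /\ transitive le.

Definition is_root (T : finType) (le : rel T) (r : T) : Prop :=
  forall z, le r z.

Definition slt (T : finType) (le : rel T) : rel T :=
  fun x y => (x != y) && le x y.

Definition chainb (T : finType) (le : rel T) (x : T) (m : nat) : bool :=
  (0 < m) && [exists t : (m.-1).-tuple T, path (slt le) x t].

(* depth: the largest m with a chain x = x_1 < ... < x_m
   (chains in a finite poset have length <= #|T|) *)
Definition depth (T : finType) (le : rel T) (x : T) : nat :=
  \max_(m < #|T|.+1 | chainb le x m) m.

Definition imm_succ (T : finType) (le : rel T) (x y : T) : Prop :=
  slt le x y /\ ~ (exists z, slt le x z /\ slt le z y).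

Definition boolean_sum (T : finType) (le : rel T) : Prop :=
  (forall x y, imm_succ le x y -> depth le x = (depth le y).+1) /\
  (forall x y, depth le x = (depth le y).+1 -> le x y).

Definition depth_count (T : finType) (le : rel T) (i : nat) : nat :=
  #|[set x : T | depth le x == i]|.

Definition has_stack (T : finType) (le : rel T) (k : nat) : bool :=
  [exists i : 'I_#|T|.+1, [forall j : 'I_k, 1 < depth_count le (i + j)]].

Definition stack_depth (T : finType) (le : rel T) : nat :=
  \max_(k < #|T|.+1 | has_stack le k) k.

(* models over n: order-preserving colouring into subsets of {p_1..p_n} *)
Definition is_model (n : nat) (T : finType) (le : rel T) (c : T -> {set 'I_n}) : Prop :=
  forall x y, le x y -> c x \subset c y.

(* bisimilarity of the rooted submodels generated by x and y
   (the up-sets of x and y with the restricted order and colouring) *)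
Definition gen_bisimilar (n : nat) (T : finType) (le : rel T) (c : T -> {set 'I_n})
  (x y : T) : Prop :=
  exists B : T -> T -> Prop,
    B x y /\
    (forall u v, B u v -> le x u /\ le y v) /\
    (forall u v, B u v -> c u = c v) /\
    (forall u v u', B u v -> le u u' -> exists v', le v v' /\ B u' v') /\
    (forall u v v', B u v -> le v v' -> exists u', le u u' /\ B u' v').

Definition n_generated (n : nat) (T : finType) (le : rel T) (c : T -> {set 'I_n}) : Prop :=
  forall x y, gen_bisimilar le c x y -> x = y.

Definition k_bisimilar (n k : nat)
  (T : finType) (le : rel T) (c : T -> {set 'I_n}) (r : T)
  (T' : finType) (le' : rel T') (c' : T' -> {set 'I_n}) (r' : T') : Prop :=
  exists S : nat -> T -> T' -> Prop,
    (forall j u v, j < k -> S j.+1 u v -> S j u v) /\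
    S k r r' /\
    (forall u v, S 0 u v -> c u = c' v) /\
    (forall j u v u', j < k -> S j.+1 u v -> le u u' ->
        exists v', le' v v' /\ S j u' v') /\
    (forall j u v v', j < k -> S j.+1 u v -> le' v v' ->
        exists u', le u u' /\ S j u' v').

Definition models_iso (n : nat)
  (T : finType) (le : rel T) (c : T -> {set 'I_n})
  (T' : finType) (le' : rel T') (c' : T' -> {set 'I_n}) : Prop :=
  exists f : T -> T', bijective f /\
    (forall u v, le' (f u) (f v) = le u v) /\
    (forall u, c' (f u) = c u).

From mathcomp Require Import all_boot.
Set Implicit Arguments. Unset Strict Implicit. Unset Printing Implicit Defensive.

(* In a Boolean sum the order is read off the depth: [a <= b] iff [a = b] or
   [depth b < depth a].  n-generatedness then forbids two points of the same
   depth to share a colour, and forces every colour repetition [v < t] to have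
   [depth v = depth t + 1] with at least two points of depth [depth t].  With
   stack-depth at most 1 this gives [u <= u'] iff the set of colours occurring
   above [u'] is contained in the set of colours occurring above [u].  A
   2-bisimulation matches every point with a point of the same colour and the
   same set of colours above it, so [u |-> colours above u] embeds both models
   onto the same ordered family of colour sets. *)

Definition up_colours (n : nat) (T : finType) (le : rel T) (c : T -> {set 'I_n})
  (u : T) : {set {set 'I_n}} := c @: [set w | le u w].

Section Layers.

Variables (T : finType) (le : rel T).

Lemma slt_irr : irreflexive (slt le).
Proof. by move=> x; rewrite /slt eqxx. Qed.

Lemma depth_le_card x : depth le x <= #|T|.
Proof. by apply/bigmax_leqP => m _; rewrite -ltnS. Qed.

Lemma depth_path x : exists2 t, path (slt le) x t & (size t).+1 = depth le x.
Proof.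
have one_lt : 1 < #|T|.+1 by rewrite ltnS; apply/card_gt0P; exists x.
have chain1 : chainb le x (Ordinal one_lt).
  by apply/existsP; exists (in_tuple [::]).
rewrite /depth (@bigmax_eq_arg _ _ (fun m : 'I__ => chainb le x m) val chain1).
case: arg_maxnP => //= m /andP[m_gt0 /existsP[t xt]] _.
by exists (val t); rewrite // size_tuple prednK.
Qed.

Lemma depth_count_gt1 a a' :
  a != a' -> depth le a' = depth le a -> 1 < depth_count le (depth le a).
Proof. by move=> neq_aa' eq_d; apply/card_gt1P; exists a, a'; rewrite !inE eq_d eqxx. Qed.

Lemma layer_mate b :
  1 < depth_count le (depth le b) -> exists2 b', b' != b & depth le b' = depth le b.
Proof.
case/card_gt1P => u [w [/[!inE] /eqP du /eqP dw neq_uw]].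
by case: (eqVneq u b) => [eq_ub | ]; [exists w; rewrite // -eq_ub eq_sym | exists u].
Qed.

Lemma no_adjacent_shared_layers k : stack_depth le <= 1 ->
  1 < depth_count le k.+1 -> 1 < depth_count le k -> False.
Proof.
move=> sd_le1 shared_k1 shared_k.
case/card_gt1P: (shared_k) => u [_ [/[!inE] /eqP du _ _]].
have k_lt : k < #|T|.+1 by rewrite ltnS -du depth_le_card.
have two_lt : 2 < #|T|.+1 by rewrite ltnS (leq_trans shared_k) ?max_card.
have stack2 : has_stack le 2.
  apply/existsP; exists (Ordinal k_lt); apply/forallP => -[[|[|j]] //= _].
    by rewrite addn0.
  by rewrite addn1.
have := @leq_bigmax_cond _ (fun k : 'I__ => has_stack le k) val (Ordinal two_lt) stack2.
by move/leq_trans/(_ sd_le1).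
Qed.

Hypothesis le_poset : is_poset le.

Lemma slt_trans : transitive (slt le).
Proof.
case: le_poset => _ [le_anti le_trans] y x z /andP[neq_xy le_xy] /andP[neq_yz le_yz].
rewrite /slt (le_trans _ _ _ le_xy le_yz) andbT.
apply: contra_neq neq_xy => eq_xz; apply: le_anti.
by rewrite le_xy eq_xz le_yz.
Qed.

Lemma depth_ge_path x t : path (slt le) x t -> (size t).+1 <= depth le x.
Proof.
move=> xt; have uniq_xt : uniq (x :: t) := sorted_uniq slt_trans slt_irr (s := x :: t) xt.
have size_lt : (size t).+1 < #|T|.+1.
  by rewrite ltnS -[(size t).+1]/(size (x :: t)) -(card_uniqP uniq_xt) max_card.
have chain : chainb le x (Ordinal size_lt) by apply/existsP; exists (in_tuple t).
exact: (@leq_bigmax_cond _ (fun m : 'I__ => chainb le x m) val _ chain).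
Qed.

Lemma depth_slt a b : slt le a b -> depth le b < depth le a.
Proof.
move=> lt_ab; have [t bt <-] := depth_path b.
by apply: (@depth_ge_path a (b :: t)); rewrite /= lt_ab.
Qed.

Lemma depth_lt a b : a != b -> le a b -> depth le b < depth le a.
Proof. by move=> neq_ab le_ab; apply: depth_slt; rewrite /slt neq_ab. Qed.

Lemma depth_le a b : le a b -> depth le b <= depth le a.
Proof. by case: (eqVneq a b) => [-> | neq_ab /(depth_lt neq_ab)/ltnW]. Qed.

Lemma le_depth_eq a b : le a b -> depth le a = depth le b -> a = b.
Proof.
case: (eqVneq a b) => // neq_ab /(depth_lt neq_ab) lt_ba eq_d.
by rewrite eq_d ltnn in lt_ba.
Qed.

Lemma depth_step a k : depth le a = k.+2 -> exists2 b, slt le a b & depth le b = k.+1.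
Proof.
move=> da; have [[|b t] /= a_path size_t] := depth_path a; first by rewrite da in size_t.
case/andP: a_path => lt_ab bt; exists b => //.
apply/eqP; rewrite eqn_leq -ltnS -da depth_slt //=.
by rewrite da in size_t; case: size_t => <-; apply: depth_ge_path.
Qed.

Hypothesis le_bsum : boolean_sum le.

Lemma le_of_depth_lt a b : depth le b < depth le a -> le a b.
Proof.
case: le_bsum => _ le_next lt_ba.
have [k da] : exists k, depth le a = (k + depth le b).+1.
  by exists (depth le a - (depth le b).+1); rewrite -addnS subnK.
elim: k a da {lt_ba} => [|k IHk] a da; first exact: le_next.
have [a' /andP[_ le_aa'] da'] := depth_step (da : depth le a = (k + depth le b).+2).
by case: le_poset => _ [_ le_trans]; apply: le_trans le_aa' (IHk a' da').
Qed.

Variables (n : nat) (c : T -> {set 'I_n}).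
Hypotheses (c_model : is_model le c) (c_gen : n_generated le c).

Lemma colour_between a b d : le a b -> le b d -> c a = c d -> c b = c a.
Proof.
move=> le_ab le_bd eq_c; apply/eqP.
by rewrite eqEsubset (c_model le_ab) andbT eq_c; apply: c_model.
Qed.

Lemma eq_of_up_sets a b : c a = c b ->
  (forall w, le a w -> w != a -> le b w) ->
  (forall w, le b w -> w != b -> le a w) -> a = b.
Proof.
case: le_poset => le_refl [_ le_trans] eq_c up_ab up_ba; apply: c_gen.
exists (fun u v => (u = a /\ v = b) \/ (u = v /\ le a u /\ le b u)).
split; first by left.
split; first by move=> u v [[-> ->] | [-> []]]; rewrite ?le_refl.
split; first by move=> u v [[-> ->] | [-> _]].
split.
  move=> u v u' [[-> ->] | [-> [le_au le_bu]]] le_uu'.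
    have [-> | neq_u'a] := eqVneq u' a; first by exists b; split; [|left].
    have le_bu' := up_ab u' le_uu' neq_u'a.
    by exists u'; split => //; right.
  have le_au' := le_trans _ _ _ le_au le_uu'; have le_bu' := le_trans _ _ _ le_bu le_uu'.
  by exists u'; split => //; right.
move=> u v v' [[-> ->] | [-> [le_av le_bv]]] le_vv'.
  have [-> | neq_v'b] := eqVneq v' b; first by exists a; split; [|left].
  have le_av' := up_ba v' le_vv' neq_v'b.
  by exists v'; split => //; right.
have le_av' := le_trans _ _ _ le_av le_vv'; have le_bv' := le_trans _ _ _ le_bv le_vv'.
by exists v'; split => //; right.
Qed.

Lemma eq_of_depth_colour a b : depth le a = depth le b -> c a = c b -> a = b.
Proof.
move=> eq_d eq_c; apply: eq_of_up_sets => // w le_w neq_w; apply: le_of_depth_lt.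
  by rewrite -eq_d depth_lt // eq_sym.
by rewrite eq_d depth_lt // eq_sym.
Qed.

Lemma next_layer_repeat_shared a b :
  depth le a = (depth le b).+1 -> c a = c b -> 1 < depth_count le (depth le b).
Proof.
move=> da eq_c; rewrite ltnNge; apply/negP => single.
have only_b w : depth le w = depth le b -> w = b.
  move=> dw; apply/eqP; apply: contraTT single => neq_wb.
  by rewrite -ltnNge (depth_count_gt1 _ dw) // eq_sym.
have eq_ab : a = b.
  apply: eq_of_up_sets => // w le_w neq_w.
    have : depth le w < depth le a by rewrite depth_lt // eq_sym.
    rewrite da ltnS leq_eqVlt => /orP[/eqP/only_b -> | lt_wb]; last exact: le_of_depth_lt.
    by case: le_poset.
  by apply: le_of_depth_lt; rewrite da ltnS ltnW // depth_lt // eq_sym.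
by move/eqP: da; rewrite eq_ab ltn_eqF.
Qed.

Lemma colour_repeat_depth v t :
  le v t -> v != t -> c v = c t -> depth le v = (depth le t).+1.
Proof.
move=> le_vt neq_vt eq_c; have lt_tv := depth_lt neq_vt le_vt.
apply/eqP; rewrite eqn_leq lt_tv andbT leqNgt; apply/negP.
case dv: (depth le v) => [|[|k]] //= lt_tk.
have [s /andP[_ le_vs] ds] := depth_step dv.
have le_st : le s t by apply: le_of_depth_lt; rewrite ds.
have eq_cs : c s = c v := colour_between le_vs le_st eq_c.
have [w neq_ws dw] : exists2 w, w != s & depth le w = depth le s.
  apply: layer_mate; apply: (@next_layer_repeat_shared v); first by rewrite dv ds.
  by rewrite eq_cs.
have le_vw : le v w by apply: le_of_depth_lt; rewrite dv dw ds.
have le_wt : le w t by apply: le_of_depth_lt; rewrite dw ds.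
move/eqP: neq_ws; apply; apply: eq_of_depth_colour dw _.
by rewrite eq_cs (colour_between le_vw le_wt eq_c).
Qed.

Lemma colour_repeat_shared_layer v t :
  le v t -> v != t -> c v = c t -> 1 < depth_count le (depth le t).
Proof.
move=> le_vt neq_vt eq_c.
exact: next_layer_repeat_shared (colour_repeat_depth le_vt neq_vt eq_c) eq_c.
Qed.

Hypothesis stack_le1 : stack_depth le <= 1.

Lemma mate_colour_notin_up_colours a a' :
  a != a' -> depth le a' = depth le a -> c a' \notin up_colours le c a.
Proof.
move=> neq_aa' da'; apply/imsetP => -[s /[!inE] le_as eq_c].
have neq_sa : s != a.
  apply: contra_neq neq_aa' => eq_sa; apply: eq_of_depth_colour (esym da') _.
  by rewrite eq_c eq_sa.
have lt_sa : depth le s < depth le a by rewrite depth_lt // eq_sym.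
have le_a's : le a' s by apply: le_of_depth_lt; rewrite da'.
have neq_a's : a' != s by apply: contraTneq lt_sa => <-; rewrite da' ltnn.
have d_a' := colour_repeat_depth le_a's neq_a's eq_c.
apply: (no_adjacent_shared_layers (k := depth le s) stack_le1).
  by rewrite -d_a' da' (depth_count_gt1 neq_aa' da').
exact: colour_repeat_shared_layer le_a's neq_a's eq_c.
Qed.

Lemma le_up_colours u u' : le u u' = (up_colours le c u' \subset up_colours le c u).
Proof.
case: le_poset => le_refl [_ le_trans].
apply/idP/idP => [le_uu' | sub_up].
  apply/subsetP => _ /imsetP[w /[!inE] le_u'w ->].
  by apply: imset_f; rewrite inE (le_trans _ _ _ le_uu' le_u'w).
have mem_up w : le u' w -> c w \in up_colours le c u.
  by move=> le_u'w; apply: (subsetP sub_up); apply: imset_f; rewrite inE.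
case: (ltngtP (depth le u') (depth le u)) => [lt_u'u | lt_uu' | eq_d].
- exact: le_of_depth_lt.
- have /imsetP[t /[!inE] le_ut eq_c] := mem_up u' (le_refl u').
  have le_u't : le u' t by apply: le_of_depth_lt; apply: leq_ltn_trans (depth_le le_ut) lt_uu'.
  have neq_u't : u' != t by apply: contraTneq lt_uu' => ->; rewrite -leqNgt depth_le.
  have d_u' := colour_repeat_depth le_u't neq_u't eq_c.
  have eq_ut : u = t.
    by apply: (le_depth_eq le_ut); apply/eqP; rewrite eqn_leq (depth_le le_ut) andbT -ltnS -d_u'.
  have [t' neq_t'u d_t'] : exists2 t', t' != u & depth le t' = depth le u.
    by apply: layer_mate; rewrite eq_ut (colour_repeat_shared_layer le_u't neq_u't eq_c).
  have le_u't' : le u' t' by apply: le_of_depth_lt; rewrite d_t'.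
  have := mem_up t' le_u't'.
  by rewrite (negbTE (mate_colour_notin_up_colours _ d_t')) // eq_sym.
- have [<- // | neq_uu'] := eqVneq u u'.
  have := mem_up u' (le_refl u').
  by rewrite (negbTE (mate_colour_notin_up_colours neq_uu' eq_d)).
Qed.

Lemma up_colours_inj : injective (up_colours le c).
Proof.
move=> u u' eq_up; case: le_poset => _ [le_anti _]; apply: le_anti.
by rewrite !le_up_colours eq_up subxx.
Qed.

End Layers.

Lemma k_bisimilar_sym (n k : nat)
  (T : finType) (le : rel T) (c : T -> {set 'I_n}) (r : T)
  (T' : finType) (le' : rel T') (c' : T' -> {set 'I_n}) (r' : T') :
  k_bisimilar k le c r le' c' r' -> k_bisimilar k le' c' r' le c r.
Proof.
case=> S [S_mono [S_top [S_col [S_forth S_back]]]].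
exists (fun j v u => S j u v).
split; first by move=> j v u; apply: S_mono.
split=> //; split; first by move=> v u /S_col.
by split=> j v u; [apply: S_back | apply: S_forth].
Qed.

Lemma up_colours_of_two_bisimilar (n : nat)
  (T : finType) (le : rel T) (c : T -> {set 'I_n}) (r : T)
  (T' : finType) (le' : rel T') (c' : T' -> {set 'I_n}) (r' : T') :
  is_root le r -> k_bisimilar 2 le c r le' c' r' ->
  forall u, exists2 v, c' v = c u & up_colours le' c' v = up_colours le c u.
Proof.
move=> root_r [S [S_mono [S_top [S_col [S_forth S_back]]]]] u.
have [v [_ S1uv]] := S_forth 1 r r' u isT S_top (root_r u).
exists v; first by rewrite (S_col _ _ (S_mono 0 u v isT S1uv)).
apply/setP => X; apply/imsetP/imsetP => -[w /[!inE] le_w ->].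
  have [u' [le_uu' /S_col <-]] := S_back 0 u v w isT S1uv le_w.
  by exists u'; rewrite ?inE.
have [v' [le_vv' /S_col ->]] := S_forth 0 u v w isT S1uv le_w.
by exists v'; rewrite ?inE.
Qed.

Theorem mainTheorem6 (n : nat)
  (P : finType) (leP : rel P) (c : P -> {set 'I_n}) (x : P)
  (Q : finType) (leQ : rel Q) (c' : Q -> {set 'I_n}) (y : Q) :
  is_poset leP -> is_root leP x -> boolean_sum leP -> stack_depth leP <= 1 ->
  is_model leP c -> n_generated leP c ->
  is_poset leQ -> is_root leQ y -> boolean_sum leQ -> stack_depth leQ <= 1 ->
  is_model leQ c' -> n_generated leQ c' ->
  k_bisimilar 2 leP c x leQ c' y ->
  models_iso leP c leQ c'.
Proof.
move=> posetP rootP bsumP stackP modelP genP posetQ rootQ bsumQ stackQ modelQ genQ bisim.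
have [f col_f up_f] := fin_all_exists2 (up_colours_of_two_bisimilar rootP bisim).
have [g _ up_g] :=
  fin_all_exists2 (up_colours_of_two_bisimilar rootQ (k_bisimilar_sym bisim)).
have injP := up_colours_inj posetP bsumP modelP genP stackP.
have injQ := up_colours_inj posetQ bsumQ modelQ genQ stackQ.
exists f; split; last split => // u v.
  by exists g => [u | v]; [apply: injP; rewrite up_g up_f | apply: injQ; rewrite up_f up_g].
by rewrite (le_up_colours posetQ bsumQ modelQ genQ stackQ)
  (le_up_colours posetP bsumP modelP genP stackP) !up_f.
Qed.
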